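(* Let a countable group $G$ act freely and continuously on a Polish space $X$, let $E$ be an equivalence relation on $X$, and let $H\le G$ (acting on $X$ by restriction). (i) If $E$ is $G$-clopen then $E$ is $H$-clopen. (ii) If $E$ is $H$-clopen and $E\subseteq E^X_H$, then $E$ is $G$-clopen.
   Context: For a group $K$ acting continuously on $X$, a relation $R\subseteq X\times X$ is $K$-clopen if for every $k\in K$ the set $\{x\in X:(x,k\cdot x)\in R\}$ is clopen. $E^X_H$ is the orbit equivalence relation of the $H$-action. The action is free if $g\cdot x\ne x$ for all $x$ and all $g\ne 1_G$. *)

From HB Require Import structures.
From mathcomp Require Import all_boot all_order all_algebra.
From mathcomp Require Import all_classical all_reals all_analysis.
From mathcomp Require Import Rstruct Rstruct_topology.
Set Implicit Arguments. Unset Strict Implicit. Unset Printing Implicit Defensive.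
Import Order.TTheory GRing.Theory Num.Theory.
Local Open Scope classical_set_scope.
Local Open Scope ring_scope.

Notation Real := Rdefinitions.R.

Definition is_metric (X : Type) (d : X -> X -> Real) : Prop :=
  (forall x y, 0 <= d x y) /\
  (forall x y, d x y = 0 <-> x = y) /\
  (forall x y, d x y = d y x) /\
  (forall x y z, d x z <= d x y + d y z).

Definition metric_induces (X : topologicalType) (d : X -> X -> Real) : Prop :=
  forall A : set X, open A <->
    (forall x, A x -> exists2 e : Real, 0 < e & [set y | d x y < e] `<=` A).

Definition metric_complete (X : Type) (d : X -> X -> Real) : Prop :=
  forall u : nat -> X,
    (forall e : Real, 0 < e -> exists N, forall m n, (N <= m)%N -> (N <= n)%N ->
        d (u m) (u n) < e) ->
    exists x, forall e : Real, 0 < e -> exists N, forall n, (N <= n)%N -> d (u n) x < e.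

Definition polish (X : topologicalType) : Prop :=
  (exists D : set X, countable D /\ dense D) /\
  (exists d : X -> X -> Real, [/\ is_metric d, metric_induces d & metric_complete d]).

Definition is_group (G : Type) (mul : G -> G -> G) (one : G) (inv : G -> G) : Prop :=
  [/\ forall a b c, mul a (mul b c) = mul (mul a b) c,
      forall a, mul one a = a /\ mul a one = a &
      forall a, mul (inv a) a = one /\ mul a (inv a) = one].

Definition is_subgroup (G : Type) (mul : G -> G -> G) (one : G) (inv : G -> G)
    (H : set G) : Prop :=
  [/\ H one, forall a b, H a -> H b -> H (mul a b) & forall a, H a -> H (inv a)].

(* act is a continuous action of G on X (G discrete) *)
Definition is_cont_action (G : Type) (mul : G -> G -> G) (one : G)
    (X : topologicalType) (act : G -> X -> X) : Prop :=
  [/\ forall x, act one x = x,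
      forall g h x, act (mul g h) x = act g (act h x) &
      forall g, continuous (act g)].

Definition free_action (G X : Type) (one : G) (act : G -> X -> X) : Prop :=
  forall g x, g <> one -> act g x <> x.

Definition is_equiv_rel (X : Type) (E : X -> X -> Prop) : Prop :=
  [/\ forall x, E x x, forall x y, E x y -> E y x &
      forall x y z, E x y -> E y z -> E x z].

Definition K_clopen (G : Type) (X : topologicalType) (act : G -> X -> X)
    (K : set G) (E : X -> X -> Prop) : Prop :=
  forall k, K k -> clopen [set x | E x (act k x)].

Definition orbit_rel (G X : Type) (act : G -> X -> X) (H : set G) (x y : X) : Prop :=
  exists2 h, H h & y = act h x.

From mathcomp Require Import all_boot all_classical all_reals all_analysis.
From Stdlib Require Import Classical.

Set Implicit Arguments.
Unset Strict Implicit.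
Local Open Scope classical_set_scope.

(* Part (i) is monotonicity of K-clopenness in K.  For part (ii), an element g
   outside H can never relate x to g.x: by E <= E^X_H we would get g.x = h.x
   for some h in H, and freeness forces g = h.  So for g outside H the set
   {x | E x (g.x)} is empty, hence clopen. *)

Lemma K_clopen_sub (G : Type) (X : topologicalType) (act : G -> X -> X)
    (K L : set G) (E : X -> X -> Prop) :
  K `<=` L -> K_clopen act L E -> K_clopen act K E.
Proof. by move=> KL EL k /KL; apply: EL. Qed.

Section FreeAction.

Variables (G : Type) (mul : G -> G -> G) (one : G) (inv : G -> G).
Variables (X : topologicalType) (act : G -> X -> X).
Hypothesis groupG : is_group mul one inv.
Hypothesis actG : is_cont_action mul one act.
Hypothesis freeG : free_action one act.

Lemma free_act_inj x g h : act g x = act h x -> g = h.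
Proof.
case: groupG => mA m1 mV; case: actG => a1 aM _ egh.
have fix_x : act (mul (inv h) g) x = x by rewrite aM egh -aM (proj1 (mV h)) a1.
have hVg1 : mul (inv h) g = one by apply: NNPP => ne; exact: freeG ne fix_x.
by rewrite -(proj1 (m1 g)) -(proj2 (mV h)) -mA hVg1 (proj2 (m1 h)).
Qed.

Lemma orbit_rel_act_in (H : set G) x g : orbit_rel act H x (act g x) -> H g.
Proof. by case=> h Hh /free_act_inj ->. Qed.

Lemma K_clopen_orbit_rel (H : set G) (E : X -> X -> Prop) :
  (forall x y, E x y -> orbit_rel act H x y) ->
  K_clopen act H E -> K_clopen act [set: G] E.
Proof.
move=> sub_orbit clopenH g _.
have [Hg|notHg] := pselect (H g); first exact: clopenH.
suff -> : [set x | E x (act g x)] = set0 by exact: clopen0.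
by apply/seteqP; split=> x //= /sub_orbit /orbit_rel_act_in.
Qed.

End FreeAction.

Theorem lemma3p5 (G : Type) (mul : G -> G -> G) (one : G) (inv : G -> G)
    (X : topologicalType) (act : G -> X -> X) (E : X -> X -> Prop) (H : set G) :
  is_group mul one inv ->
  countable [set: G] ->
  polish X ->
  is_cont_action mul one act ->
  free_action one act ->
  is_equiv_rel E ->
  is_subgroup mul one inv H ->
  (K_clopen act [set: G] E -> K_clopen act H E) /\
  (K_clopen act H E -> (forall x y, E x y -> orbit_rel act H x y) ->
     K_clopen act [set: G] E).
Proof.
move=> groupG _ _ actG freeG _ _; split; first exact: K_clopen_sub.
by move=> clopenH sub_orbit; exact (K_clopen_orbit_rel groupG actG freeG sub_orbit clopenH).
Qed.
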